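(* In the setting of the context, for all integers $m\ge1$ and $n\ge0$, $$\alpha(A_{n+m-1}A_{n+m-2}\cdots A_n)\ \ge\ \gamma(1-\gamma)^{m-1}\,\mathcal G_{[n,n+m)}.$$
   Context: Let $N\ge2$, $d\ge1$, $\mathcal N=\{1,\dots,N\}$, $\gamma\in(0,1)$. For each nonempty $S\subseteq\mathcal N$ and $j\in\mathcal N$ let $\omega_{S,j}:(\mathbb R^d)^N\to[0,\infty)$ satisfy $\sum_{j\in S}\omega_{S,j}(X)=1$ and $\omega_{S,j}(X)=0$ for $j\notin S$. For each time $r\ge0$ let $\{[i]_r:i\in\mathcal N\}$ be a partition of $\mathcal N$ ($[i]_r$ the block containing $i$) and $X_r\in(\mathbb R^d)^N$ a state. Let $W_r:=(\omega_{[i]_r,j}(X_r))_{i,j}$ and $A_r:=(1-\gamma)I_N+\gamma W_r$. For $n\ge0,m\ge1$ set $\mathcal T^{ij}_{[n,n+m)}:=\{r: n\le r<n+m,\ [i]_r=[j]_r\}$ and $\mathcal G_{[n,n+m)}:=\min_{i,j\in\mathcal N}|\mathcal T^{ij}_{[n,n+m)}|$. The ergodicity coefficient of $A=(a_{ij})$ is $\alpha(A):=\min_{i,j}\sum_{k}\min\{a_{ik},a_{jk}\}$. *)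

From HB Require Import structures.
From mathcomp Require Import all_boot all_order all_algebra.
Set Implicit Arguments. Unset Strict Implicit. Unset Printing Implicit Defensive.
Import Order.TTheory GRing.Theory Num.Theory.
Local Open Scope ring_scope.

(* Minimum of a finite list of reals (the list below is always nonempty). *)
Definition seqminr (R : realFieldType) (s : seq R) : R :=
  foldr Num.min (head 0 s) s.

Definition ergco (R : realFieldType) (n : nat) (A : 'M[R]_n) : R :=
  seqminr [seq \sum_(k < n) Num.min (A i k) (A j k)
          | i <- enum 'I_n, j <- enum 'I_n].

Definition blk (N : nat) (P : {set {set 'I_N}}) (i : 'I_N) : {set 'I_N} :=
  pblock P i.

Definition Wmat (R : realFieldType) (N d : nat)
  (omega : {set 'I_N} -> 'I_N -> ('I_N -> 'rV[R]_d) -> R)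
  (P : {set {set 'I_N}}) (X : 'I_N -> 'rV[R]_d) : 'M[R]_N :=
  \matrix_(i, j) omega (blk P i) j X.

Definition Amat (R : realFieldType) (N d : nat)
  (omega : {set 'I_N} -> 'I_N -> ('I_N -> 'rV[R]_d) -> R) (gamma : R)
  (P : {set {set 'I_N}}) (X : 'I_N -> 'rV[R]_d) : 'M[R]_N :=
  (1 - gamma)%:M + gamma *: Wmat omega P X.

(* prodA A n m = A (n+m-1) *m ... *m A n  (identity if m = 0) *)
Fixpoint prodA (R : realFieldType) (N : nat) (A : nat -> 'M[R]_N) (n m : nat)
  : 'M[R]_N :=
  match m with
  | 0 => 1%:M
  | m'.+1 => A (n + m') *m prodA A n m'
  end.

Definition Tcount (N : nat) (part : nat -> {set {set 'I_N}}) (n m : nat)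
  (i j : 'I_N) : nat :=
  count (fun r => blk (part r) i == blk (part r) j) (iota n m).

Definition Gmin (N : nat) (part : nat -> {set {set 'I_N}}) (n m : nat) : nat :=
  let s := [seq Tcount part n m i j | i <- enum 'I_N, j <- enum 'I_N] in
  foldr minn (head 0%N s) s.

From HB Require Import structures.
From mathcomp Require Import all_boot all_order all_algebra.
Import Order.TTheory GRing.Theory Num.Theory.
Local Open Scope ring_scope.

(* Each factor is a lazy averaging matrix A_r = (1-g) I + g W_r
   with W_r nonnegative and row-stochastic.  Expanding the product
   B_m = A_{n+m-1} ... A_n one factor at a time shows, entrywise,
     B_m >= (1-g)^m on the diagonal, and
     B_{m+1} >= g (1-g)^m (W_n + ... + W_{n+m}),
   i.e. every factor W_r survives in the product with weight g (1-g)^m.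
   Rows i and j of W_r coincide whenever i and j lie in the same block at
   time r; summing min(B_ik, B_jk) over k then collects a full unit of row
   mass g (1-g)^m for each such time r, giving the bound with |T^{ij}|. *)

Lemma seqminr_ge (R : realFieldType) (x : R) (s : seq R) :
  s != [::] -> (forall y, y \in s -> x <= y) -> x <= seqminr s.
Proof.
case: s => [//|a s] _ lb; rewrite /seqminr /=.
have xa : x <= a by apply: lb; rewrite mem_head.
have lb_s y : y \in s -> x <= y by move=> ys; apply: lb; rewrite inE ys orbT.
rewrite le_min xa /=; elim: s lb_s {lb} => [|y s IH] lb_s //=.
rewrite le_min lb_s ?mem_head // IH // => z zs.
by apply: lb_s; rewrite inE zs orbT.
Qed.

Lemma foldr_minn_le (a y : nat) (s : seq nat) :
  y \in s -> (foldr minn a s <= y)%N.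
Proof.
elim: s => [//|z s IH] /=; rewrite in_cons => /orP [/eqP ->|ys].
  exact: geq_minl.
exact: leq_trans (geq_minr _ _) (IH ys).
Qed.

Lemma ergco_ge (R : realFieldType) (N : nat) (A : 'M[R]_N) (x : R) :
  (0 < N)%N ->
  (forall i j, x <= \sum_k Num.min (A i k) (A j k)) -> x <= ergco A.
Proof.
move=> N_gt0 lb; apply: seqminr_ge => [|y /allpairsP [[i j] [_ _ ->]] //].
set i0 : 'I_N := Ordinal N_gt0.
apply/eqP => pairs_nil.
have : \sum_k Num.min (A i0 k) (A i0 k) \in [::].
  by rewrite -pairs_nil; apply/allpairsP; exists (i0, i0); rewrite !mem_enum.
by [].
Qed.

Lemma Gmin_le_Tcount (N : nat) (part : nat -> {set {set 'I_N}}) (n m : nat)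
    (i j : 'I_N) :
  (Gmin part n m <= Tcount part n m i j)%N.
Proof.
by apply: foldr_minn_le; apply/allpairsP; exists (i, j); rewrite !mem_enum.
Qed.

Section LazyProducts.
Variables (R : realFieldType) (N : nat) (gamma : R) (W : nat -> 'M[R]_N).
Hypotheses (gamma_ge0 : 0 <= gamma) (gamma_lt1 : gamma < 1).
Hypothesis W_ge0 : forall r i k, 0 <= W r i k.

Let A (r : nat) : 'M[R]_N := (1 - gamma)%:M + gamma *: W r.

Let lazy_gt0 : 0 < 1 - gamma. Proof. by rewrite subr_gt0. Qed.
Let lazy_ge0 : 0 <= 1 - gamma. Proof. exact: ltW. Qed.

Lemma lazy_mulE r (B : 'M[R]_N) i k :
  (A r *m B) i k = (1 - gamma) * B i k + gamma * \sum_l W r i l * B l k.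
Proof. by rewrite mulmxDl mul_scalar_mx -scalemxAl !mxE. Qed.

Lemma prodA_ge0 n m i k : 0 <= prodA A n m i k.
Proof.
elim: m i k => [|m IH] i k /=; first by rewrite mxE ler0n.
rewrite lazy_mulE addr_ge0 ?mulr_ge0 ?IH //.
by apply: sumr_ge0 => l _; rewrite mulr_ge0.
Qed.

(* The lazy part keeps the diagonal of the product at least (1-g)^m. *)
Lemma prodA_diag n m k : (1 - gamma) ^+ m <= prodA A n m k k.
Proof.
elim: m => [|m IH] /=; first by rewrite mxE eqxx.
rewrite lazy_mulE exprS ler_wpDr ?ler_wpM2l //.
by rewrite mulr_ge0 // sumr_ge0 // => l _; rewrite mulr_ge0 ?prodA_ge0.
Qed.

(* Every factor W_r contributes to the product with weight g (1-g)^m; the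
   extra factor (1-g) on the right makes the induction uniform in m. *)
Lemma prodA_ge_sum n m i k :
  gamma * (1 - gamma) ^+ m * \sum_(r <- iota n m) W r i k
    <= (1 - gamma) * prodA A n m i k.
Proof.
elim: m i k => [|m IH] i k; first by rewrite big_nil mulr0 mulr_ge0 ?prodA_ge0.
rewrite -addn1 iotaD big_cat big_seq1 addn1 /= lazy_mulE !mulrDr.
apply: lerD; first by rewrite exprS mulrCA -mulrA ler_wpM2l // mulrA IH.
have diag_term : W (n + m) i k * prodA A n m k k
    <= \sum_l W (n + m) i l * prodA A n m l k.
  rewrite (bigD1 k) //= lerDl sumr_ge0 // => l _.
  by rewrite mulr_ge0 ?prodA_ge0.
rewrite exprS -!mulrA mulrCA !ler_wpM2l // (le_trans _ diag_term) //.
by rewrite mulrC ler_wpM2l ?W_ge0 ?prodA_diag.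
Qed.

Lemma prodA_lower n m i k :
  gamma * (1 - gamma) ^+ m * \sum_(r <- iota n m.+1) W r i k
    <= prodA A n m.+1 i k.
Proof.
rewrite -(ler_pM2l lazy_gt0) (le_trans _ (prodA_ge_sum n m.+1 i k)) //.
by rewrite exprS !mulrA (mulrC (1 - gamma) gamma).
Qed.

End LazyProducts.

Lemma row_overlap_ge (R : realFieldType) (N : nat) (W : nat -> 'M[R]_N)
    (M : 'M[R]_N) (c : R) (s : seq nat) (P : pred nat) (i j : 'I_N) :
  0 <= c -> (forall r l k, 0 <= W r l k) ->
  (forall r l, \sum_k W r l k = 1) ->
  (forall r k, P r -> W r i k = W r j k) ->
  (forall l k, c * \sum_(r <- s) W r l k <= M l k) ->
  c * (count P s)%:R <= \sum_k Num.min (M i k) (M j k).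
Proof.
move=> c_ge0 W_ge0 W_sum sameP dom.
have filter_le l k : \sum_(r <- s | P r) W r l k <= \sum_(r <- s) W r l k.
  by rewrite [leLHS]big_mkcond ler_sum // => r _; case: (P r).
have -> : c * (count P s)%:R = \sum_k c * \sum_(r <- s | P r) W r i k.
  rewrite -mulr_sumr exchange_big /= (eq_bigr (fun _ => 1)) => [|r _].
    by rewrite -sum1_count natr_sum.
  exact: W_sum.
apply: ler_sum => k _; rewrite le_min; apply/andP; split.
  exact: le_trans (ler_wpM2l c_ge0 (filter_le i k)) (dom i k).
rewrite (eq_bigr (fun r => W r j k)) => [|r]; last exact: sameP.
exact: le_trans (ler_wpM2l c_ge0 (filter_le j k)) (dom j k).
Qed.

Section WeightMatrices.
Variables (R : realFieldType) (N d : nat).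
Variable omega : {set 'I_N} -> 'I_N -> ('I_N -> 'rV[R]_d) -> R.
Hypothesis omega_ge0 : forall S j X, 0 <= omega S j X.
Hypothesis omega_sum : forall S X, S != set0 -> \sum_(j in S) omega S j X = 1.
Hypothesis omega_out :
  forall S j X, S != set0 -> j \notin S -> omega S j X = 0.
Variables (P : {set {set 'I_N}}) (X : 'I_N -> 'rV[R]_d).
Hypothesis P_partition : partition P [set: 'I_N].

Lemma Wmat_ge0 i k : 0 <= Wmat omega P X i k.
Proof. by rewrite mxE omega_ge0. Qed.

Lemma Wmat_row_sum i : \sum_k Wmat omega P X i k = 1.
Proof.
have blk_i : i \in blk P i.
  rewrite /blk mem_pblock.
  by case/and3P: P_partition => /eqP -> _ _; rewrite inE.
have blk_ne0 : blk P i != set0 by apply/set0Pn; exists i.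
rewrite -(omega_sum _ X blk_ne0) [RHS]big_mkcond; apply: eq_bigr => k _.
by rewrite mxE; case: ifPn => // k_out; rewrite omega_out.
Qed.

Lemma Wmat_same_block i j k :
  blk P i = blk P j -> Wmat omega P X i k = Wmat omega P X j k.
Proof. by rewrite !mxE => ->. Qed.

End WeightMatrices.

Theorem lemma3p4 (R : realFieldType) (N d : nat) (hN : (2 <= N)%N) (hd : (1 <= d)%N)
  (gamma : R) (hg0 : 0 < gamma) (hg1 : gamma < 1)
  (omega : {set 'I_N} -> 'I_N -> ('I_N -> 'rV[R]_d) -> R)
  (homega_ge0 : forall S j X, 0 <= omega S j X)
  (homega_sum : forall S X, S != set0 -> \sum_(j in S) omega S j X = 1)
  (homega_out : forall S j X, S != set0 -> j \notin S -> omega S j X = 0)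
  (part : nat -> {set {set 'I_N}})
  (hpart : forall r, partition (part r) [set: 'I_N])
  (X : nat -> 'I_N -> 'rV[R]_d)
  (n m : nat) (hm : (1 <= m)%N) :
  ergco (prodA (fun r => Amat omega gamma (part r) (X r)) n m)
    >= gamma * (1 - gamma) ^+ m.-1 * (Gmin part n m)%:R.
Proof.
pose W r := Wmat omega (part r) (X r).
have W_ge0 r i k : 0 <= W r i k by exact: Wmat_ge0 homega_ge0 _ _ _ _.
case: m hm => [//|m] _; rewrite succnK.
set c := gamma * (1 - gamma) ^+ m.
have c_ge0 : 0 <= c by rewrite mulr_ge0 ?exprn_ge0 ?subr_ge0 ?ltW.
apply: ergco_ge => [|i j]; first exact: leq_trans hN.
pose same_block r := blk (part r) i == blk (part r) j.
apply: le_trans _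
  (row_overlap_ge _ _ W _ c (iota n m.+1) same_block i j c_ge0 W_ge0 _ _ _).
- by rewrite ler_wpM2l // ler_nat Gmin_le_Tcount.
- by move=> r l; exact: Wmat_row_sum homega_sum homega_out _ _ (hpart r) l.
- by move=> r k /eqP; exact: Wmat_same_block.
- by move=> l k; exact: prodA_lower (ltW hg0) hg1 W_ge0 n m l k.
Qed.
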